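(* For every $\varepsilon>0$ there exists a two-player protocol for the problem Max-Card-$k$ (in the two-player model described in the context) with an approximation guarantee of $\frac{2}{3}-\varepsilon$ whose communication complexity is $\widetilde{O}(k/\varepsilon)$ elements. Moreover, there exists such a protocol achieving an approximation guarantee of $\frac{2}{3}$ whose communication complexity is $O(k^2)$ elements.
   Context: Two-player model for Max-Card-$k$. The global information known to both players consists of a positive integer $k$, a finite ground set $W$, and a partition $W=W_A\,\dot\cup\, W_B$. Alice privately receives a set $V_A\subseteq W_A$ and Bob privately receives a set $V_B\subseteq W_B$. There is a non-negative, monotone, submodular function $f:2^W\to\mathbb{R}_{\ge 0}$; Alice can query $f$ (via a value oracle) only on subsets of $W_A$, while Bob can query $f$ on any subset of $W$. A protocol consists of two possibly randomized algorithms: Alice's algorithm computes a message $m$ from the global information, $V_A$ and her oracle; then Bob's algorithm computes an output set $S\subseteq V_A\cup V_B$ with $|S|\le k$ from the global information, $V_B$, $m$ and his oracle. The communication complexity is the maximum length of $m$ over all inputs and the randomness; when the message consists of elements of $W$, it is measured in elements (number of elements of $W$ in $m$). The protocol has approximation guarantee $\rho$ if for every instance $\mathbb{E}[f(S)]\ge \rho\cdot\max\{f(T): T\subseteq V_A\cup V_B,\ |T|\le k\}$. A monotone submodular $f$ means $f(X)\le f(Y)$ for $X\subseteq Y$ and $f(X\cup\{v\})-f(X)\ge f(Y\cup\{v\})-f(Y)$ for $X\subseteq Y\subseteq W$, $v\notin Y$. $\widetilde{O}$ suppresses poly-logarithmic factors. No bound on computation time is required. *)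

From HB Require Import structures.
From mathcomp Require Import all_boot all_order all_algebra.
From mathcomp Require Import all_classical all_reals.
From mathcomp Require Import exp.
From Stdlib Require List.
Set Implicit Arguments. Unset Strict Implicit. Unset Printing Implicit Defensive.
Import Order.TTheory GRing.Theory Num.Theory.
Local Open Scope ring_scope.

(* Ground set W = 'I_n (any finite set up to relabelling).  The partition is
   W_A = WA, W_B = ~: WA.  A set function is f : {set 'I_n} -> R. *)

Section Defs.
Variable R : realType.

Definition monotone_sf n (f : {set 'I_n} -> R) : Prop :=
  forall X Y : {set 'I_n}, X \subset Y -> f X <= f Y.

Definition submodular_sf n (f : {set 'I_n} -> R) : Prop :=
  forall (X Y : {set 'I_n}) (v : 'I_n), X \subset Y -> v \notin Y ->
    f (v |: X) - f X >= f (v |: Y) - f Y.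

Definition nonneg_sf n (f : {set 'I_n} -> R) : Prop := forall X, 0 <= f X.

(* A finitely supported probability distribution on X: a list of
   (probability, outcome) pairs with nonnegative weights summing to 1. *)
Definition is_dist (X : Type) (d : seq (R * X)) : Prop :=
  (forall p, List.In p d -> 0 <= p.1) /\ \sum_(p <- d) p.1 = 1.

Definition expect (X : Type) (d : seq (R * X)) (g : X -> R) : R :=
  \sum_(p <- d) p.1 * g p.2.

(* Global information:
   k, n (ground set 'I_n), WA (W_A; W_B = ~: WA).
   Alice gets V_A and the value oracle restricted to subsets of W_A,
   modelled as the function X |-> f (X :&: W_A) (which carries exactly the
   values of f on subsets of W_A); she outputs a distribution over messages,
   a message being a sequence of elements of W.
   Bob gets V_B, the message, and the full oracle f; he outputs a
   distribution over sets S. *)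
Record protocol := Protocol {
  alice : forall (k n : nat) (WA VA : {set 'I_n}) (fA : {set 'I_n} -> R),
            seq (R * seq 'I_n);
  bob : forall (k n : nat) (WA VB : {set 'I_n}) (m : seq 'I_n)
          (f : {set 'I_n} -> R), seq (R * {set 'I_n})
}.

Definition restrict n (WA : {set 'I_n}) (f : {set 'I_n} -> R) : {set 'I_n} -> R :=
  fun X => f (X :&: WA).

Definition valid_instance (k n : nat) (WA VA VB : {set 'I_n})
  (f : {set 'I_n} -> R) : Prop :=
  (0 < k)%N /\ VA \subset WA /\ VB \subset ~: WA /\
  nonneg_sf f /\ monotone_sf f /\ submodular_sf f.

Definition alice_dist (P : protocol) k n (WA VA : {set 'I_n}) f :=
  alice P k WA VA (restrict WA f).

(* Optimum: max { f T : T \subseteq V_A \cup V_B, |T| <= k } (f >= 0, so 0 is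
   a harmless identity for max; T = set0 is always feasible). *)
Definition opt_val k n (VA VB : {set 'I_n}) (f : {set 'I_n} -> R) : R :=
  \big[Num.max/0]_(T : {set 'I_n} | (T \subset VA :|: VB) && (#|T| <= k)%N) f T.

Definition protocol_value (P : protocol) k n (WA VA VB : {set 'I_n}) f : R :=
  expect (alice_dist P k WA VA f)
         (fun m => expect (bob P k WA VB m f) f).

Definition protocol_wf (P : protocol) k n (WA VA VB : {set 'I_n}) f : Prop :=
  is_dist (alice_dist P k WA VA f) /\
  forall pm, List.In pm (alice_dist P k WA VA f) ->
    is_dist (bob P k WA VB pm.2 f) /\
    forall pS, List.In pS (bob P k WA VB pm.2 f) ->
      pS.2 \subset VA :|: VB /\ (#|pS.2| <= k)%N.

Definition approx_protocol (P : protocol) (rho : R) : Prop :=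
  forall k n (WA VA VB : {set 'I_n}) f, valid_instance k WA VA VB f ->
    protocol_wf P k WA VA VB f /\
    protocol_value P k WA VA VB f >= rho * opt_val k VA VB f.

Definition comm_bounded (P : protocol) (bound : nat -> R) : Prop :=
  forall k n (WA VA VB : {set 'I_n}) f, valid_instance k WA VA VB f ->
    forall pm, List.In pm (alice_dist P k WA VA f) ->
      (size pm.2)%:R <= bound k.

End Defs.

From mathcomp Require Import all_boot all_order all_algebra.
From mathcomp Require Import reals exp.
From mathcomp Require Import lra zify.

Set Implicit Arguments. Unset Strict Implicit. Unset Printing Implicit Defensive.
Import Order.TTheory GRing.Theory Num.Theory.
Local Open Scope ring_scope.

(* Alice sends, for every size a on a grid of step s in [0, k], a best set S1 of V_A
   with |S1| <= a and a best augmentation S2 of S1 in V_A with |S2| <= a; Bob answers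
   with a best set of size at most k among the received elements and V_B.  Split an
   optimal set O as A + B with A in V_A and B in V_B, and take a grid point a in
   [|A|, |A| + s - 1].  From f A <= f S1 and f (S1 + A) <= f (S1 + S2), three
   applications of submodularity give 2 f O <= 2 f (S1 + B) + f (S2 + B), so S1 + B or
   S2 + B has value at least 2/3 f O.  Both have at most k + s - 1 elements, and
   repeatedly dropping the element of least marginal value down to k elements loses at
   most a factor k / (k + s - 1).  Taking s = floor(eps k) + 1 gives 2/3 - eps with
   O(k / eps) elements, s = 1 gives 2/3 with O(k^2) elements, and for eps > 1 the
   guarantee is negative, so Alice may stay silent. *)

Section SubmodularSetFunction.
Variables (R : realType) (n : nat) (f : {set 'I_n} -> R).
Hypotheses (f_ge0 : nonneg_sf f) (f_mono : monotone_sf f) (f_sub : submodular_sf f).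

Lemma submodular_setU_diff (X Y Z : {set 'I_n}) : X \subset Y ->
  f (Y :|: Z) - f Y <= f (X :|: Z) - f X.
Proof.
rewrite -[Z]set_enum; elim: (enum Z) X Y => [|z s IH] X Y sXY.
  by rewrite set_nil !setU0 !subrr.
rewrite set_cons [Y :|: _]setUCA [X :|: _]setUCA; set S := [set:: s].
suff : f (z |: (Y :|: S)) - f (Y :|: S) <= f (z |: (X :|: S)) - f (X :|: S).
  by have := IH X Y sXY; lra.
have [zYS|zYS] := boolP (z \in Y :|: S); last exact: f_sub (setSU _ sXY) zYS.
have /setUidPr-> : [set z] \subset Y :|: S by rewrite sub1set.
by rewrite subrr subr_ge0; apply/f_mono/subsetUr.
Qed.

Lemma submodular_setUI (A B : {set 'I_n}) : f (A :|: B) + f (A :&: B) <= f A + f B.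
Proof.
have := submodular_setU_diff B (subsetIl A B).
have -> : A :&: B :|: B = B by apply/setUidPr/subsetIr.
lra.
Qed.

Lemma submodular_mono_setUI (X Y C D : {set 'I_n}) :
  C \subset X :|: Y -> D \subset X :&: Y -> f C + f D <= f X + f Y.
Proof.
move=> sC sD; apply: le_trans (submodular_setUI X Y).
by apply: lerD; apply: f_mono.
Qed.

Lemma two_candidates_bound (A B S1 S2 : {set 'I_n}) :
  f A <= f S1 -> f (S1 :|: A) <= f (S1 :|: S2) ->
  2 * f (A :|: B) <= 2 * f (S1 :|: B) + f (S2 :|: B).
Proof.
move=> fA_le fS1A_le.
have cross_S12 : f (S1 :|: S2) + f B <= f (S1 :|: B) + f (S2 :|: B).
  apply: submodular_mono_setUI; first by apply: setUSS; apply: subsetUl.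
  by rewrite subsetI !subsetUr.
have cross_S1A : f (A :|: B) + f S1 <= f (S1 :|: B) + f (S1 :|: A).
  apply: submodular_mono_setUI; last by rewrite subsetI !subsetUl.
  by rewrite setUC; apply: setUSS; apply: subsetUr.
have cross_AB := submodular_setUI A B.
have := f_ge0 (A :&: B).
lra.
Qed.

Lemma sum_removal_loss_le (X Y : {set 'I_n}) : Y \subset X ->
  \sum_(y in Y) (f X - f (X :\ y)) <= f X - f (X :\: Y).
Proof.
move: {2}#|Y| (erefl #|Y|) => m; elim: m Y => [|m IH] Y cY sYX.
  by rewrite (cards0_eq cY) big_set0 setD0 subrr.
have [y yY] : {y | y \in Y}.
  by case: (set_0Vmem Y) => // Y0; move: cY; rewrite Y0 cards0.
have yX : y \in X := subsetP sYX y yY.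
rewrite (big_setD1 y yY) /=.
have -> : X :\: Y = (X :\: (Y :\ y)) :\ y by rewrite setDDl setUC setD1K.
have := IH (Y :\ y) _ (subset_trans (subD1set Y y) sYX).
rewrite (cardsD1 y Y) yY add1n in cY; case: cY => cY /(_ cY).
suff : f X - f (X :\ y) <= f (X :\: (Y :\ y)) - f ((X :\: (Y :\ y)) :\ y) by lra.
have yXY : y \in X :\: (Y :\ y) by rewrite !inE eqxx yX.
have := f_sub (setSD [set y] (subsetDl X (Y :\ y))) (negbT (setD11 y X)).
by rewrite !setD1K.
Qed.

Lemma exists_cheap_removal (X : {set 'I_n}) (x0 : 'I_n) : x0 \in X ->
  exists2 x, x \in X & (#|X|.-1)%:R * f X <= #|X|%:R * f (X :\ x).
Proof.
move=> x0X; pose loss y := f X - f (X :\ y).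
have [x xX loss_min] := arg_minP loss x0X.
exists x => //.
have loss_le : #|X|%:R * loss x <= f X.
  rewrite mulr_natl -sumr_const; apply: le_trans (ler_sum _ loss_min) _.
  have := sum_removal_loss_le (subxx X); rewrite setDv.
  have := f_ge0 set0; rewrite /loss; lra.
have cardX : (#|X|%:R : R) = (#|X|.-1)%:R + 1.
  by rewrite natr1 prednK //; apply/card_gt0P; exists x0.
move: loss_le; rewrite /loss cardX; lra.
Qed.

Lemma exists_subset_card_le_ratio (k d : nat) (X : {set 'I_n}) :
  (k <= d)%N -> (#|X| <= d)%N ->
  exists X' : {set 'I_n}, [/\ X' \subset X, (#|X'| <= k)%N & k%:R * f X <= d%:R * f X'].
Proof.
move: {2}#|X| (erefl #|X|) => m; elim: m X d => [|m IH] X d cX kd Xd;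
  (have [Xk|kX] := leqP #|X| k;
   first by exists X; split=> //; rewrite ler_wpM2r // ler_nat).
  by rewrite cX ltn0 in kX.
have [x0 x0X] : exists x0, x0 \in X by apply/card_gt0P; rewrite cX.
have [x xX cheap] := exists_cheap_removal x0X.
have cXx : #|X :\ x| = m by move: cX; rewrite (cardsD1 x X) xX add1n => -[].
have km : (k <= m)%N by rewrite -ltnS -cX.
have [X' [sX' X'k fX']] := IH (X :\ x) m cXx km (eq_leq cXx).
exists X'; split => //; first exact: subset_trans sX' (subD1set X x).
rewrite cX /= in cheap Xd.
apply: le_trans (_ : _ <= m.+1%:R * f X') _; last by rewrite ler_wpM2r // ler_nat.
have [m0|m_gt0] := posnP m.
  by move: km; rewrite m0 leqn0 => /eqP->; rewrite mul0r mulr_ge0.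
rewrite -(ler_pM2l (_ : 0 < m%:R :> R)) ?ltr0n //.
have := ler_wpM2l (ler0n R k) cheap; have := ler_wpM2l (ler0n R m.+1) fX'.
nra.
Qed.

End SubmodularSetFunction.

Section OneWayProtocols.
Variable R : realType.

Definition best_subset n (D : {set 'I_n}) (a : nat) (g : {set 'I_n} -> R) : {set 'I_n} :=
  [arg max_(S > set0 | (S \subset D) && (#|S| <= a)%N) g S]%O.

Lemma best_subsetP n (D : {set 'I_n}) (a : nat) (g : {set 'I_n} -> R) :
  [/\ best_subset D a g \subset D, (#|best_subset D a g| <= a)%N &
      forall T : {set 'I_n}, T \subset D -> (#|T| <= a)%N -> g T <= g (best_subset D a g)].
Proof.
rewrite /best_subset; case: arg_maxP => [|S /andP[SD Sa] Smax].
  by rewrite sub0set cards0.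
by split=> // T TD Ta; apply: Smax; rewrite TD Ta.
Qed.

Definition best_augmentation n (VA : {set 'I_n}) (fA : {set 'I_n} -> R) (a : nat) :=
  best_subset VA a (fun S => fA (best_subset VA a fA :|: S)).

Definition bob_best k n (VB : {set 'I_n}) (m : seq 'I_n) (f : {set 'I_n} -> R) :=
  best_subset ([set x in m] :|: VB) k f.

Definition one_way_protocol
    (msg : forall k n : nat, {set 'I_n} -> ({set 'I_n} -> R) -> seq 'I_n) : protocol R :=
  Protocol (fun k n _ VA fA => [:: (1, msg k n VA fA)])
           (fun k n _ VB m f => [:: (1, bob_best k VB m f)]).

Lemma is_dist_seq1 (X : Type) (x : X) : is_dist [:: ((1 : R), x)].
Proof. by split=> [p [<-|[]] //|]; rewrite big_seq1. Qed.

Lemma one_way_protocol_wf msg k n (WA VA VB : {set 'I_n}) (f : {set 'I_n} -> R) :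
  [set x in msg k n VA (restrict WA f)] \subset VA ->
  protocol_wf (one_way_protocol msg) k WA VA VB f.
Proof.
move=> msgVA; split=> [|pm [<-|[]] //]; first exact: is_dist_seq1.
split=> [|pS [<-|[]] //]; first exact: is_dist_seq1.
have [TmVB Tk _] := best_subsetP ([set x in msg k n VA (restrict WA f)] :|: VB) k f.
by split=> //; apply: subset_trans TmVB (setSU _ msgVA).
Qed.

Lemma one_way_protocol_value msg k n (WA VA VB : {set 'I_n}) (f : {set 'I_n} -> R) :
  protocol_value (one_way_protocol msg) k WA VA VB f =
  f (bob_best k VB (msg k n VA (restrict WA f)) f).
Proof. by rewrite /protocol_value /expect /= !big_seq1 !mul1r. Qed.

Lemma opt_val_ge0 k n (VA VB : {set 'I_n}) (f : {set 'I_n} -> R) :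
  nonneg_sf f -> 0 <= opt_val k VA VB f.
Proof.
move=> f_ge0; rewrite /opt_val; elim/big_ind: _ => //.
by move=> x y x_ge0 _; rewrite le_max x_ge0.
Qed.

Lemma opt_val_le k n (VA VB : {set 'I_n}) (f : {set 'I_n} -> R) (c v : R) :
  0 <= c -> 0 <= v ->
  (forall O : {set 'I_n}, O \subset VA :|: VB -> (#|O| <= k)%N -> c * f O <= v) ->
  c * opt_val k VA VB f <= v.
Proof.
move=> c_ge0 v_ge0 Ov; rewrite /opt_val.
elim/big_ind: _ => [|x y xv yv|O /andP[]]; first by rewrite mulr0.
  by rewrite maxr_pMr // ge_max xv yv.
exact: Ov.
Qed.

Definition size_grid (s k : nat) : seq nat :=
  [seq minn (j * s) k | j <- iota 0 (k %/ s).+2].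

Lemma size_grid_cover (s k a : nat) : (0 < s)%N -> (a <= k)%N ->
  exists2 a', a' \in size_grid s k & (a <= a' <= a + s.-1)%N.
Proof.
move=> s_gt0 ak; pose j := ((a + s.-1) %/ s)%N.
have js_le : (j * s <= a + s.-1)%N := leq_divM _ _.
have js_gt : (a + s.-1 < j.+1 * s)%N := ltn_ceil _ s_gt0.
have j_le : (j <= (k %/ s).+1)%N.
  apply: leq_trans (leq_div2r s (leq_add ak (leqnn s.-1))) _.
  apply: leq_trans (leq_divDl _ _ _) _.
  by rewrite (divn_small (_ : s.-1 < s)%N) ?addn0 ?addn1 ?ltn_predL.
exists (minn (j * s) k); first by apply/mapP; exists j; rewrite // mem_iota.
rewrite leq_min ak andbT (leq_trans (geq_minl _ _) js_le) andbT.
by move: js_gt; rewrite mulSn; lia.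
Qed.

Lemma size_grid_le (s k a : nat) : a \in size_grid s k -> (a <= k)%N.
Proof. by case/mapP=> j _ ->; apply: geq_minr. Qed.

Definition grid_message s k n (VA : {set 'I_n}) (fA : {set 'I_n} -> R) : seq 'I_n :=
  flatten [seq enum (best_subset VA a fA) ++ enum (best_augmentation VA fA a)
          | a <- size_grid s k].

Lemma grid_message_sub s k n (VA : {set 'I_n}) fA :
  [set x in grid_message s k VA fA] \subset VA.
Proof.
apply/subsetP=> x; rewrite inE => /flatten_mapP[a _].
have [S1VA _ _] := best_subsetP VA a fA.
have [S2VA _ _] := best_subsetP VA a (fun S => fA (best_subset VA a fA :|: S)).
by rewrite mem_cat !mem_enum => /orP[]; [apply: (subsetP S1VA)|apply: (subsetP S2VA)].
Qed.

Lemma best_sets_sub_grid_message s k n (VA : {set 'I_n}) fA a : a \in size_grid s k ->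
  best_subset VA a fA :|: best_augmentation VA fA a \subset [set x in grid_message s k VA fA].
Proof.
move=> aG; apply/subsetP=> x xS; rewrite inE; apply/flatten_mapP; exists a => //.
by rewrite mem_cat !mem_enum -in_setU.
Qed.

Lemma size_grid_message s k n (VA : {set 'I_n}) fA :
  (size (grid_message s k VA fA) <= 2 * k * (k %/ s).+2)%N.
Proof.
rewrite size_flatten /shape -map_comp sumnE big_map big_seq.
apply: (@leq_trans (\sum_(a <- size_grid s k | a \in size_grid s k) 2 * k)%N).
  apply: leq_sum => a aG /=.
  have [_ S1a _] := best_subsetP VA a fA.
  have [_ S2a _] := best_subsetP VA a (fun S => fA (best_subset VA a fA :|: S)).
  rewrite size_cat -!cardE mul2n -addnn.
  by apply: leq_add; apply: leq_trans (size_grid_le aG).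
by rewrite -big_seq big_const_seq count_predT iter_addn_0 size_map size_iota.
Qed.

End OneWayProtocols.

Section GridMessageApproximation.
Variables (R : realType) (n : nat) (f : {set 'I_n} -> R).
Hypotheses (f_ge0 : nonneg_sf f) (f_mono : monotone_sf f) (f_sub : submodular_sf f).

Lemma bob_best_ratio (k d : nat) (VB S : {set 'I_n}) (m : seq 'I_n) :
  S \subset [set x in m] :|: VB -> (#|S| <= d)%N -> (k <= d)%N ->
  k%:R * f S <= d%:R * f (bob_best k VB m f).
Proof.
move=> SmVB Sd kd.
have [S' [sS' S'k fS']] := exists_subset_card_le_ratio f_ge0 f_sub kd Sd.
have [_ _ best] := best_subsetP ([set x in m] :|: VB) k f.
apply: le_trans fS' _; rewrite ler_wpM2l // best //.
exact: subset_trans sS' SmVB.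
Qed.

Lemma grid_message_approx (s k : nat) (VA VB O : {set 'I_n}) (fA : {set 'I_n} -> R) :
  (0 < s)%N -> (forall S : {set 'I_n}, S \subset VA -> fA S = f S) ->
  O \subset VA :|: VB -> (#|O| <= k)%N ->
  2 * k%:R * f O <= 3 * (k + s.-1)%:R * f (bob_best k VB (grid_message s k VA fA) f).
Proof.
move=> s_gt0 fA_VA OV Ok.
set m := grid_message s k VA fA; set T := bob_best k VB m f.
set A := O :&: VA; set B := O :\: VA.
have AVA : A \subset VA := subsetIr O VA.
have BVB : B \subset VB.
  apply/subsetP=> x; rewrite !inE => /andP[/negbTE xVA xO].
  by move/subsetP/(_ x xO): OV; rewrite inE xVA.
have cardAB : (#|A| + #|B| <= k)%N by rewrite cardsID.
have [a aG /andP[Aa aAs]] := size_grid_cover s_gt0 (leq_trans (leq_addr _ _) cardAB).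
have [S1VA S1a S1max] := best_subsetP VA a fA.
have [S2VA S2a S2max] := best_subsetP VA a (fun S => fA (best_subset VA a fA :|: S)).
rewrite -/(best_augmentation VA fA a) in S2VA S2a S2max.
set S1 := best_subset VA a fA in S1VA S1a S1max S2max.
set S2 := best_augmentation VA fA a in S2VA S2a S2max.
have fA_le : f A <= f S1 by rewrite -!fA_VA //; apply: S1max.
have fS1A_le : f (S1 :|: A) <= f (S1 :|: S2).
  by rewrite -!fA_VA ?subUset ?S1VA ?S2VA //; apply: S2max.
have S12m : S1 :|: S2 \subset [set x in m] := best_sets_sub_grid_message VA fA aG.
have candidate (S : {set 'I_n}) : S \subset S1 :|: S2 -> (#|S| <= a)%N ->
    k%:R * f (S :|: B) <= (k + s.-1)%:R * f T.
  move=> SS12 Sa; apply: bob_best_ratio; last exact: leq_addr.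
    by apply: setUSS BVB; apply: subset_trans SS12 S12m.
  by apply: leq_trans (leq_card_setU S B) _; lia.
have := two_candidates_bound f_ge0 f_mono f_sub B fA_le fS1A_le.
rewrite setID => /(ler_wpM2l (ler0n R k)).
have := candidate S1 (subsetUl _ _) S1a; have := candidate S2 (subsetUr _ _) S2a.
lra.
Qed.

End GridMessageApproximation.

Definition grid_protocol (R : realType) (s : nat -> nat) : protocol R :=
  one_way_protocol (fun k n VA fA => grid_message (s k) k VA fA).

Definition silent_protocol (R : realType) : protocol R :=
  one_way_protocol (fun k n VA fA => [::]).

Lemma grid_protocol_approx (R : realType) (s : nat -> nat) (rho : R) :
  (forall k, 0 < s k)%N ->
  (forall k, (0 < k)%N -> rho * (3 * (k + (s k).-1)%:R) <= 2 * k%:R) ->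
  approx_protocol (grid_protocol R s) rho.
Proof.
move=> s_gt0 rho_le k n WA VA VB f [k_gt0 [VA_WA [_ [f_ge0 [f_mono f_sub]]]]].
split; first by apply: one_way_protocol_wf; apply: grid_message_sub.
rewrite one_way_protocol_value.
set T := bob_best _ _ _ f; pose c : R := 3 * (k + (s k).-1)%:R.
have c_gt0 : 0 < c by rewrite mulr_gt0 // ltr0n addn_gt0 k_gt0.
rewrite -(ler_pM2l c_gt0) mulrA [c * rho]mulrC.
apply: le_trans (_ : 2 * k%:R * opt_val k VA VB f <= _).
  by rewrite ler_wpM2r ?opt_val_ge0 ?rho_le.
apply: opt_val_le => [||O OV Ok]; rewrite ?mulr_ge0 //.
apply: grid_message_approx => // S SVA.
by rewrite /restrict (setIidPl (subset_trans SVA VA_WA)).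
Qed.

Lemma silent_protocol_approx (R : realType) (rho : R) :
  rho <= 0 -> approx_protocol (silent_protocol R) rho.
Proof.
move=> rho_le0 k n WA VA VB f [_ [_ [_ [f_ge0 _]]]].
split; first by apply: one_way_protocol_wf; apply/subsetP=> x; rewrite inE.
rewrite one_way_protocol_value; apply: le_trans (f_ge0 _).
exact: mulr_le0_ge0 (opt_val_ge0 _ _ _ f_ge0).
Qed.

Lemma grid_protocol_comm (R : realType) (s : nat -> nat) (b : nat -> R) :
  (forall k, (0 < k)%N -> (2 * k * (k %/ s k).+2)%:R <= b k) ->
  comm_bounded (grid_protocol R s) b.
Proof.
move=> b_ge k n WA VA VB f [k_gt0 _] pm [<-|[]] //=.
by apply: le_trans (b_ge k k_gt0); rewrite ler_nat size_grid_message.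
Qed.

Lemma silent_protocol_comm (R : realType) (b : nat -> R) :
  (forall k, (0 < k)%N -> 0 <= b k) -> comm_bounded (silent_protocol R) b.
Proof. by move=> b_ge0 k n WA VA VB f [k_gt0 _] pm [<-|[]] //=; apply: b_ge0. Qed.

Definition eps_step (R : realType) (eps : R) (k : nat) : nat := (Num.truncn (eps * k%:R)).+1.

Lemma eps_step_approx (R : realType) (eps : R) (k : nat) : 0 < eps ->
  (2 / 3 - eps) * (3 * (k + (eps_step eps k).-1)%:R) <= 2 * k%:R.
Proof.
move=> eps_gt0; rewrite natrD /=.
have D_le : (Num.truncn (eps * k%:R))%:R <= eps * k%:R.
  by rewrite truncn_le mulr_ge0 // ltW.
have := mulr_ge0 (ltW eps_gt0) (ler0n R (Num.truncn (eps * k%:R))).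
nra.
Qed.

Lemma eps_step_comm (R : realType) (eps : R) (k : nat) : 0 < eps <= 1 ->
  (2 * k * (k %/ eps_step eps k).+2)%:R <= 6 * (k%:R / eps).
Proof.
move=> /andP[eps_gt0 eps_le1]; set q := (k %/ eps_step eps k)%N.
have q_eps : q%:R * eps <= 1.
  have [k0|k_gt0] := posnP k; first by rewrite /q k0 div0n mul0r.
  have step_gt : eps * k%:R < (eps_step eps k)%:R.
    by have /andP[] := truncn_itv (mulr_ge0 (ltW eps_gt0) (ler0n R k)).
  have qs_le : q%:R * (eps_step eps k)%:R <= k%:R :> R.
    by rewrite -natrM ler_nat leq_divM.
  have k_pos : 0 < k%:R :> R by rewrite ltr0n.
  rewrite -(ler_pM2r k_pos) mul1r -mulrA.
  by apply: le_trans qs_le; rewrite ler_wpM2l // ltW.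
rewrite -addn2 !natrM natrD.
set z := k%:R / eps; have z_ge0 : 0 <= z by rewrite divr_ge0 // ltW.
have -> : k%:R = z * eps by rewrite /z divfK // gt_eqF.
nra.
Qed.

Theorem theorem1 :
  (exists (C c : nat), forall (R : realType) (eps : R), 0 < eps ->
     exists P : protocol R,
       approx_protocol P (2 / 3 - eps) /\
       comm_bounded P (fun k => C%:R * (k%:R / eps) * (ln (k%:R / eps + 2)) ^+ c))
  /\
  (exists C : nat, forall R : realType,
     exists P : protocol R,
       approx_protocol P (2 / 3) /\
       comm_bounded P (fun k => C%:R * (k%:R ^+ 2))).
Proof.
split.
  exists 6%N, 0%N => R eps eps_gt0.
  have [eps_le1|eps_gt1] := lerP eps 1.
    exists (grid_protocol R (eps_step eps)); split.
      by apply: grid_protocol_approx => // k _; apply: eps_step_approx.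
    apply: grid_protocol_comm => k _.
    by rewrite expr0 mulr1 eps_step_comm // eps_gt0.
  exists (silent_protocol R); split; first by apply: silent_protocol_approx; lra.
  apply: silent_protocol_comm => k _.
  by rewrite expr0 mulr1 mulr_ge0 // divr_ge0 // ltW.
exists 6%N => R; exists (grid_protocol R (fun=> 1%N)); split.
  by apply: grid_protocol_approx => // k _; rewrite addn0; lra.
apply: grid_protocol_comm => k k_gt0.
by rewrite divn1 -natrX -natrM ler_nat; nia.
Qed.
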